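(* For every input sequence of requests $\sigma$ of the List Update with Time Windows problem, the algorithm ALG described in the context satisfies $$ALG(\sigma)\le 24\cdot OPT(\sigma).$$
   Context: List Update with Time Windows. A set $\mathbb{E}$ of $n$ elements is kept in an ordered list (position $1$ is the head). An input $\sigma$ is a sequence of requests $r_1,\dots,r_m$; request $r_k$ specifies an element $e_k\in\mathbb{E}$, an arrival time $a_k$ and a deadline $q_k\ge a_k$. At any time an algorithm may (a) perform an access up to position $i$, at cost $i$, which serves every pending request (arrived and not yet served) whose element currently lies in positions $1,\dots,i$; (b) swap two adjacent elements of its list at cost $1$. Actions are instantaneous (time does not advance). Every request $r_k$ must be served at some time in $[a_k,q_k]$. The cost of an algorithm on $\sigma$ is the total access cost plus the number of swaps. An online algorithm knows at time $t$ only the requests that have arrived by time $t$. $OPT(\sigma)$ denotes the minimum cost of an (offline) feasible solution; the online algorithm and $OPT$ start from the same initial list. Algorithm ALG: whenever the current time equals the deadline of at least one pending request, let the triggering element be the element at the largest current position among those elements having a pending request whose deadline is the current time, and let $i$ be its position. ALG accesses the first $\min(2i-1,n)$ positions (serving all pending requests for elements in them) and then moves the triggering element to the front of its list by $i-1$ adjacent swaps. *)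

From HB Require Import structures.
From mathcomp Require Import all_boot all_order all_algebra.
Set Implicit Arguments. Unset Strict Implicit. Unset Printing Implicit Defensive.
Import Order.TTheory GRing.Theory Num.Theory.

Section LUTW.
Variable R : realFieldType.
(* The n elements are 'I_n; a list is a seq of them (head = position 1). *)
Variable n : nat.

Record request := Request { elem : 'I_n; arr : R; dl : R }.

(* Access i : access up to (1-based) position i, cost i.
   Swap j   : swap the elements at 0-based positions j and j+1 (i.e. 1-based
              positions j+1 and j+2), cost 1 (a no-op if out of range). *)
Inductive action := Access of nat | Swap of nat.

Definition swap_adj (j : nat) (L : seq 'I_n) : seq 'I_n :=
  match drop j L with
  | x :: y :: s => take j L ++ y :: x :: s
  | _ => L
  end.

Definition apply_act (L : seq 'I_n) (a : action) : seq 'I_n :=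
  match a with Access _ => L | Swap j => swap_adj j L end.

Definition act_cost (a : action) : nat :=
  match a with Access i => i | Swap _ => 1%N end.

Definition sched := seq (R * action).

Definition sched_cost (S : sched) : nat := \sum_(x <- S) act_cost x.2.

(* the list just before the s-th action (0-based) *)
Definition list_before (L0 : seq 'I_n) (S : sched) (s : nat) : seq 'I_n :=
  foldl apply_act L0 (map snd (take s S)).

Definition pos (L : seq 'I_n) (e : 'I_n) : nat := (index e L).+1.

Definition serves_at (L0 : seq 'I_n) (S : sched) (r : request) (s : nat) : bool :=
  let: (t, a) := nth (0%R, Access 0) S s in
  [&& (arr r <= t)%R, (t <= dl r)%R &
      match a with
      | Access i => pos (list_before L0 S s) (elem r) <= i
      | Swap _ => false
      end].

Definition feasible (L0 : seq 'I_n) (sigma : seq request) (S : sched) : bool :=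
  sorted (fun x y : R => (x <= y)%R) (map fst S) &&
  all (fun r => has (serves_at L0 S r) (iota 0 (size S))) sigma.

Record astate := AState { aL : seq 'I_n; aserved : seq bool; asched : sched }.

Definition alg_step (sigma : seq request) (st : astate) (t : R) : astate :=
  let L := aL st in
  let ps := zip sigma (aserved st) in
  let pend (rb : request * bool) := (arr rb.1 <= t)%R && ~~ rb.2 in
  let trig := [seq rb <- ps | pend rb && (dl rb.1 == t)] in
  if nilp trig then st else
  let i := \max_(rb <- trig) pos L (elem rb.1) in
  let p := minn (2 * i - 1) n in
  let served' := [seq rb.2 || (pend rb && (pos L (elem rb.1) <= p)) | rb <- ps] in
  let mv := [seq Swap j | j <- rev (iota 0 i.-1)] in
  AState (foldl apply_act L mv) served'
         (asched st ++ (t, Access p) :: [seq (t, a) | a <- mv]).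

Definition alg_run (L0 : seq 'I_n) (sigma : seq request) : astate :=
  foldl (alg_step sigma) (AState L0 (nseq (size sigma) false) [::])
        (sort (fun x y : R => (x <= y)%R) (undup (map dl sigma))).

Definition alg_cost (L0 : seq 'I_n) (sigma : seq request) : nat :=
  sched_cost (asched (alg_run L0 sigma)).

End LUTW.

From HB Require Import structures.
From mathcomp Require Import all_boot all_order all_algebra.
Import Order.TTheory GRing.Theory Num.Theory.
From mathcomp Require Import zify.

(* ALG's run is a sequence of events k = 0 .. m-1 at strictly increasing
   deadlines: event k finds its triggering element at position i_k of its
   list, accesses depth p_k = min(2 i_k - 1, n) and moves the element to the
   front, paying p_k + i_k - 1 <= 3 i_k - 2 (alg_trace, alg_trace_cost).
   The key property of the trace is that a request of a later event, if it
   had arrived at an earlier event, lay beyond that event's access depth.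

   Fix any feasible schedule S of OPT and the potential 6 * inversions
   between ALG's and OPT's lists.  Each swap of OPT raises it by at most 6
   (inversions_swap); an event, whose element sits at position j in OPT's
   list, pays with its potential drop for all but 12 min(i, j) - (3 i + 8)
   (inversions_mtf, event_amortized).  Then j is at most the depth J of the
   OPT access serving the event's request plus the OPT swaps pushing the
   element back meanwhile, each swap pushing back for at most one event
   (pushback_total); and the events served by one OPT access have doubling
   positions i (same_serve_doubling), so they charge at most
   sum (3 i + 8) + 24 J to it (charging).  Altogether ALG pays at most
   6 + 12 per OPT swap and 24 per unit of OPT access (events_cost_le_opt). *)

Set Implicit Arguments.
Unset Strict Implicit.
Unset Printing Implicit Defensive.

Section MoveToFront.
Variable T : eqType.
Implicit Types (s L : seq T) (p q x y z : T).

Definition mtf x L : seq T := x :: filter (predC1 x) L.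

Lemma index_filter_lt (a : pred T) p q s : a p -> a q ->
  (index p (filter a s) < index q (filter a s)) = (index p s < index q s).
Proof.
move=> ap aq; elim: s => [|y s IH] //=.
case ay: (a y) => /=.
  by case: (y == p); case: (y == q) => //=; rewrite ltnS.
have yp : y != p by apply: contraFN ay => /eqP ->.
have yq : y != q by apply: contraFN ay => /eqP ->.
by rewrite (negPf yp) (negPf yq) ltnS.
Qed.

Lemma mtf_index_lt x L p q :
  (index p (mtf x L) < index q (mtf x L)) =
  ((p == x) && (q != x)) || [&& p != x, q != x & index p L < index q L].
Proof.
rewrite /mtf /=.
case: (eqVneq x p) => [<-|xp]; case: (eqVneq x q) => [<-|xq]; rewrite ?eqxx //=.
by rewrite ltnS index_filter_lt //= eq_sym.
Qed.

Lemma mtf_index_ge x L y : uniq L -> y != x -> index y L <= index y (mtf x L).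
Proof.
move=> uL yx; rewrite /mtf /= eq_sym (negPf yx).
elim: L uL => [|a L IH] //= /andP [aL uL].
case: (eqVneq a y) => [<-|ay] //.
case: (eqVneq a x) => [ax|ax] /=; last by rewrite (negPf ay) ltnS IH.
subst a; suff -> : [seq b <- L | b != x] = L by [].
by apply/all_filterP/allP => b bL; apply: contraNneq aL => <-.
Qed.

Lemma index_neq_lt L p q : p \in L -> q \in L -> p != q ->
  (index p L < index q L) || (index q L < index p L).
Proof.
move=> pL qL; apply: contraNT; case: ltngtP => // e _.
by rewrite -(nth_index p pL) -(nth_index p qL) e.
Qed.

Lemma index_swap_lt s1 s y z p q :
  index q (s1 ++ z :: y :: s) < index p (s1 ++ z :: y :: s) ->
  (index q (s1 ++ y :: z :: s) < index p (s1 ++ y :: z :: s))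
  || ((q == z) && (p == y)).
Proof.
rewrite !index_cat.
case qs: (q \in s1); case ps: (p \in s1) => //.
- by move=> ->.
- by move=> _; rewrite -index_mem in qs; apply/orP; left; lia.
- by move=> h; rewrite -index_mem in ps; lia.
rewrite !ltn_add2l /=.
case: (eqVneq z q) => [e1|zq]; case: (eqVneq y q) => [e2|yq];
case: (eqVneq z p) => [e3|zp]; case: (eqVneq y p) => [e4|yp]; subst;
rewrite ?eqxx //=; lia.
Qed.

Lemma index_swap_le s1 s y z w :
  index w (s1 ++ z :: y :: s) <=
  index w (s1 ++ y :: z :: s) + (index w (s1 ++ y :: z :: s) == size s1).
Proof.
rewrite !index_cat; case: (w \in s1); first by rewrite leq_addr.
rewrite /=; case: (eqVneq z w) => [e1|zw]; case: (eqVneq y w) => [e2|yw];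
subst; rewrite ?eqxx /=; lia.
Qed.

End MoveToFront.

Section ListsOfElements.
Variable n : nat.
Local Notation E := (seq 'I_n).
Implicit Types (L A O s : E) (x z p q : 'I_n).

Lemma swap_adj_cat s1 s y z :
  swap_adj (size s1) (s1 ++ y :: z :: s) = s1 ++ z :: y :: s.
Proof. by rewrite /swap_adj drop_size_cat // take_size_cat. Qed.

Lemma swaps_to_front s x t :
  foldl (@apply_act n) (s ++ x :: t) [seq Swap j | j <- rev (iota 0 (size s))]
  = x :: s ++ t.
Proof.
elim/last_ind: s t => [|s y IH] t //=.
rewrite size_rcons -addn1 iotaD rev_cat /= add0n.
by rewrite cat_rcons /= swap_adj_cat IH cat_rcons.
Qed.

Lemma front_swaps_mtf L x : uniq L -> x \in L ->
  foldl (@apply_act n) L [seq Swap j | j <- rev (iota 0 (pos L x).-1)] = mtf x L.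
Proof.
move=> uL xL.
have HL : L = take (index x L) L ++ x :: drop (index x L).+1 L.
  by rewrite -{1}(cat_take_drop (index x L) L) (drop_nth x) ?index_mem ?nth_index.
set s1 := take _ L in HL *; set s2 := drop _ L in HL *.
have -> : (pos L x).-1 = size s1 by rewrite /s1 size_take index_mem xL.
rewrite [in LHS]HL swaps_to_front /mtf; congr (_ :: _).
move: uL; rewrite HL filter_cat /= eqxx cat_uniq /= => /and3P [_ /norP [x1 _] /andP [x2 _]].
congr (_ ++ _); symmetry; apply/all_filterP/allP => b bs /=.
  by apply: contraNneq x1 => <-.
by apply: contraNneq x2 => <-.
Qed.

Lemma perm_swap_adj j L : perm_eq (swap_adj j L) L.
Proof.
rewrite /swap_adj; case e: (drop j L) => [|y [|z s]] //.
rewrite -[in X in perm_eq _ X](cat_take_drop j L) e perm_cat2l.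
by rewrite (perm_catCA [:: z] [:: y] s).
Qed.

Lemma perm_apply_act L a : perm_eq (apply_act L a) L.
Proof. by case: a => [i|j] //=; apply: perm_swap_adj. Qed.

Lemma perm_mtf L x : uniq L -> x \in L -> perm_eq (mtf x L) L.
Proof. by move=> uL xL; rewrite perm_sym /mtf -rem_filter // perm_to_rem. Qed.

Lemma full_mem L x : perm_eq L (enum 'I_n) -> x \in L.
Proof. by move/perm_mem => ->; rewrite mem_enum. Qed.

Lemma full_uniq L : perm_eq L (enum 'I_n) -> uniq L.
Proof. by move/perm_uniq => ->; apply: enum_uniq. Qed.

Lemma full_pos_le L z : perm_eq L (enum 'I_n) -> pos L z <= n.
Proof.
move=> pL; have := index_mem z L; rewrite full_mem // (perm_size pL) size_enum_ord.
exact.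
Qed.

Definition before L p q := index p L < index q L.
Definition inversions A O :=
  \sum_p \sum_q (before A p q && before O q p : nat).

Lemma count_before L x : perm_eq L (enum 'I_n) ->
  \sum_q (before L q x : nat) = index x L.
Proof.
move=> pL.
transitivity (\sum_q (q \in take (index x L) L : nat)).
  by apply: eq_bigr => q _; rewrite /before in_take // full_mem.
have -> : \sum_q (q \in take (index x L) L : nat) = #|take (index x L) L|.
  by rewrite -sum1_card [RHS]big_mkcond; apply: eq_bigr => q _; case: (_ \in _).
rewrite (card_uniqP _); last exact/take_uniq/full_uniq.
by rewrite size_take index_mem full_mem.
Qed.

Lemma sum_pick x (F : 'I_n -> nat) : \sum_q (q == x) * F q = F x.
Proof.
by rewrite (bigD1 x) //= eqxx mul1n big1 ?addn0 // => q /negPf ->.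
Qed.

Lemma inversions_refl L : inversions L L = 0.
Proof. by apply: big1 => p _; apply: big1 => q _; rewrite /before; case: ltngtP. Qed.

Lemma inversions_swap A O j : inversions A (swap_adj j O) <= (inversions A O).+1.
Proof.
rewrite /swap_adj; case e: (drop j O) => [|y [|z s]]; try exact: leqnSn.
have HO : O = take j O ++ y :: z :: s by rewrite -e cat_take_drop.
set s1 := take j O in HO *; rewrite [in X in _ <= X.+1]HO.
apply: (@leq_trans (\sum_p \sum_q
   ((before A p q && before (s1 ++ y :: z :: s) q p : nat) + ((q == z) && (p == y))))).
  apply: leq_sum => p _; apply: leq_sum => q _.
  have := @index_swap_lt _ s1 s y z p q; rewrite /before.
  case: (index p A < index q A) => //=.
  case: (index q (s1 ++ z :: y :: s) < _) => //=.
  by case: (index q (s1 ++ y :: z :: s) < _); case: ((q == z) && (p == y)) => //= /(_ isT).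
rewrite -addn1 /inversions; apply: eq_leq.
under eq_bigr => p _ do rewrite big_split /=.
rewrite big_split /=; congr (_ + _).
rewrite (bigD1 y) //= [X in _ + X]big1 => [|p /negPf py].
  by rewrite addn0 (bigD1 z) //= !eqxx big1 // => q /negPf ->.
by apply: big1 => q _; rewrite py andbF.
Qed.

Lemma inversions_apply A O a :
  inversions A (apply_act O a) <= inversions A O + (if a is Swap _ then 1 else 0).
Proof. by case: a => [i|j] /=; rewrite ?addn0 ?addn1 ?inversions_swap. Qed.

Definition movesback O a z : bool :=
  if a is Swap j then (index z O == j) && (j.+1 < size O) else false.

Lemma index_apply O a z : index z (apply_act O a) <= index z O + movesback O a z.
Proof.
case: a => [i|j] /=; first by rewrite addn0.
rewrite /swap_adj; case e: (drop j O) => [|y [|w s]]; try by rewrite leq_addr.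
have HO : O = take j O ++ y :: w :: s by rewrite -e cat_take_drop.
have sz : size (take j O) = j.
  by rewrite size_take; case: ltnP => // h; move: e; rewrite drop_oversize.
have -> : j.+1 < size O by rewrite HO size_cat sz /=; lia.
rewrite andbT -{1}sz; have := @index_swap_le _ (take j O) s y w z.
by rewrite -HO sz.
Qed.

Lemma movesback_uniq O a z1 z2 : movesback O a z1 -> movesback O a z2 -> z1 = z2.
Proof.
case: a => [//|j] /= /andP [/eqP h1 s1] /andP [/eqP h2 _].
have m1 : z1 \in O by rewrite -index_mem h1 ltnW.
have m2 : z2 \in O by rewrite -index_mem h2 ltnW.
by rewrite -(nth_index z1 m1) -(nth_index z1 m2) h1 h2.
Qed.

(* Moving x to the front of A removes the b inversions of pairs (q, x) where
   q precedes x in A only, and creates the a pairs (x, q) where q precedes x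
   in both lists; a + b counts x's predecessors in A and a is bounded by the
   number of x's predecessors in O. *)
Lemma inversions_mtf A O x : perm_eq A (enum 'I_n) -> perm_eq O (enum 'I_n) ->
  let a := \sum_q (before A q x && before O q x : nat) in
  let b := \sum_q (before A q x && before O x q : nat) in
  [/\ inversions (mtf x A) O + b = inversions A O + a, a + b = index x A
    & a <= index x O].
Proof.
move=> pA pO a b.
set T := fun L p q => (before L p q && before O q p : nat).
have pw p q : T (mtf x A) p q + (q == x) * T A p q + (p == x) * T A p q
            = T A p q + (p == x) * T (mtf x A) p q.
  rewrite /T /before mtf_index_lt.
  case: (eqVneq p x) => [e1|px]; case: (eqVneq q x) => [e2|qx]; subst;
    rewrite ?eqxx ?ltnn /= ?andbF ?mul1n ?mul0n ?addn0 //=.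
  by rewrite addnC.
have S1 : \sum_p \sum_q (T (mtf x A) p q + (q == x) * T A p q + (p == x) * T A p q)
   = inversions (mtf x A) O + b + \sum_q T A x q.
  rewrite /inversions; under eq_bigr => p _ do rewrite !big_split /=.
  rewrite !big_split /=; congr (_ + _ + _); first by apply: eq_bigr => p _; rewrite sum_pick.
  by under eq_bigr => p _ do rewrite -big_distrr /=; rewrite sum_pick.
have S2 : \sum_p \sum_q (T A p q + (p == x) * T (mtf x A) p q)
   = inversions A O + \sum_q (before O q x : nat).
  rewrite /inversions; under eq_bigr => p _ do rewrite !big_split /=.
  rewrite big_split /=; congr (_ + _).
  under eq_bigr => p _ do rewrite -big_distrr /=.
  rewrite sum_pick; apply: eq_bigr => q _; rewrite /T /before mtf_index_lt eqxx /=.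
  by case: (eqVneq q x) => [->|qx] //=; rewrite ltnn.
have S3 : \sum_q (before O q x : nat) = \sum_q T A x q + a.
  rewrite -big_split /=; apply: eq_bigr => q _; rewrite /T /before.
  case: (eqVneq q x) => [->|qx]; first by rewrite ltnn andbF.
  have := index_neq_lt (full_mem q pA) (full_mem x pA) qx.
  by case: ltngtP => //= _ _; case: (index q O < _).
split.
- have : inversions (mtf x A) O + b + \sum_q T A x q
         = inversions A O + \sum_q T A x q + a.
    by rewrite -S1 (eq_bigr _ (fun p _ => eq_bigr _ (fun q _ => pw p q))) S2 S3 addnA.
  lia.
- rewrite -(count_before x pA) /a /b -big_split /=; apply: eq_bigr => q _.
  rewrite /before; case: (eqVneq q x) => [->|qx]; first by rewrite ltnn.
  have := index_neq_lt (full_mem q pO) (full_mem x pO) qx.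
  by case: ltngtP => //= _ _; case: (index q A < _).
- by rewrite -(count_before x pO) /a; apply: leq_sum => q _; case: (before A q x).
Qed.

End ListsOfElements.

(* Charging a group of events to one access of depth J. *)
Section Charging.
Variables (f : nat -> nat) (c : nat -> bool) (J : nat).

Fixpoint last_marked m :=
  if m is m'.+1 then (if c m' then f m' else last_marked m') else 0.

(* Bound on the excess charged so far, given the last marked value x. *)
Definition excess x := minn (18 * x) (minn (12 * J + 6 * x) (24 * J)).

Lemma excess_step x i : 2 * x <= i -> excess x + 12 * minn i J <= excess i + (3 * i + 8).
Proof. rewrite /excess; lia. Qed.

Lemma last_markedP m :
  last_marked m = 0 \/ exists2 k, k < m & c k /\ last_marked m = f k.
Proof.
elim: m => [|m IH] /=; first by left.
case ck: (c m); first by right; exists m.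
case: IH => [->|[k km [ck0 ->]]]; first by left.
by right; exists k => //; apply: ltnW.
Qed.

(* The charging lemma, by induction on m with the invariant that the
   excess is bounded by excess (last_marked m). *)
Lemma charging m :
  (forall k k', k < k' -> k' < m -> c k -> c k' -> 2 * f k <= f k') ->
  \sum_(k < m) c k * (12 * minn (f k) J) <=
  \sum_(k < m) c k * (3 * f k + 8) + 24 * J.
Proof.
move=> doubling.
suff inv m' : m' <= m -> \sum_(k < m') c k * (12 * minn (f k) J) <=
  \sum_(k < m') c k * (3 * f k + 8) + excess (last_marked m').
  by apply: (leq_trans (inv m (leqnn m))); rewrite leq_add2l /excess; lia.
elim: m' => [|m' IH] lem; first by rewrite !big_ord0.
rewrite !big_ord_recr /=; have := IH (ltnW lem).
case ck: (c m'); rewrite ?mul1n ?mul0n ?addn0 //.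
have hx : 2 * last_marked m' <= f m'.
  by case: (last_markedP m') => [->|[k km [ck0 ->]]] //; apply: doubling.
move=> hI; apply: leq_trans (leq_add hI (leqnn _)) _.
rewrite -!addnA leq_add2l; move: (excess_step hx).
by move: (excess (last_marked m')) (excess (f m')) (minn (f m') J) => g1 g2 d; lia.
Qed.

End Charging.

(* Requests get the equality of their (element, arrival, deadline) triples,
   so that membership in sigma can be expressed with \in. *)
Definition request_triple (R : realFieldType) n (r : request R n) :=
  (elem r, arr r, dl r).
Definition triple_request (R : realFieldType) n (x : 'I_n * R * R) :=
  Request x.1.1 x.1.2 x.2.
Lemma request_tripleK R n : cancel (@request_triple R n) (@triple_request R n).
Proof. by case. Qed.
HB.instance Definition _ (R : realFieldType) n :=
  Equality.copy (request R n) (can_type (@request_tripleK R n)).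

Lemma bigmax_witness (I : eqType) (F : I -> nat) (s : seq I) : ~~ nilp s ->
  exists2 x, x \in s & \max_(y <- s) F y = F x.
Proof.
elim: s => [|x s IH] //= _.
case: s IH => [|y s] IH; first by exists x; rewrite ?inE // big_seq1.
have [z zs ez] := IH isT; rewrite big_cons ez.
case: (leqP (F z) (F x)) => h.
  by exists x; [rewrite inE eqxx | lia].
by exists z; [rewrite inE zs orbT | lia].
Qed.

Lemma zip_update_false (A : eqType) (s : seq A) (b : seq bool) g a :
  (a, false) \in zip s [seq rb.2 || g rb | rb <- zip s b] ->
  ((a, false) \in zip s b) && ~~ g (a, false).
Proof.
elim: s b => [|y s IH] [|c b] //=; rewrite !inE.
case/orP => [/eqP [-> e]|/IH /andP [-> ->]]; last by rewrite orbT.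
by case: c e => //= <-; rewrite eqxx.
Qed.

(* The events of ALG's run: event k happens at the deadline dl (rr k) of its
   triggering request rr k, whose element is at position trig_pos k of the
   list LL k; ALG accesses up to access_depth k and moves that element to
   the front, at cost event_cost k. *)
Section Events.
Variables (R : realFieldType) (n : nat).
Variables (LL : nat -> seq 'I_n) (rr : nat -> request R n).

Definition trig_pos k := pos (LL k) (elem (rr k)).
Definition access_depth k := minn (2 * trig_pos k - 1) n.
Definition event_cost k := access_depth k + (trig_pos k).-1.

End Events.

Definition ext T (f : nat -> T) j v k := if k == j then v else f k.

Lemma ext_new T (f : nat -> T) j v : ext f j v j = v.
Proof. by rewrite /ext eqxx. Qed.

Lemma ext_lt T (f : nat -> T) j v k : k < j -> ext f j v k = f k.
Proof. by rewrite /ext => /ltn_eqF ->. Qed.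

Lemma trig_pos_ext R n (LL : nat -> seq 'I_n) (rr : nat -> request R n) m L r k :
  k < m -> trig_pos (ext LL m.+1 L) (ext rr m r) k = trig_pos LL rr k.
Proof. by move=> km; rewrite /trig_pos !ext_lt ?(leqW km). Qed.

Lemma access_depth_ext R n (LL : nat -> seq 'I_n) (rr : nat -> request R n) m L r k :
  k < m -> access_depth (ext LL m.+1 L) (ext rr m r) k = access_depth LL rr k.
Proof. by move=> km; rewrite /access_depth trig_pos_ext. Qed.

Section AlgorithmTrace.
Variables (R : realFieldType) (n : nat) (L0 : seq 'I_n).
Variable sigma : seq (request R n).
Local Notation req := (request R n).

Record alg_trace m (LL : nat -> seq 'I_n) (rr : nat -> req) : Prop := AlgTrace {
  trace_start : LL 0 = L0;
  trace_mtf : forall k, k < m -> LL k.+1 = mtf (elem (rr k)) (LL k);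
  trace_req : forall k, k < m -> rr k \in sigma;
  trace_time : forall k k', k < k' -> k' < m -> (dl (rr k) < dl (rr k'))%R;
  trace_unserved : forall k k', k' < k -> k < m -> (arr (rr k) <= dl (rr k'))%R ->
    access_depth LL rr k' < pos (LL k') (elem (rr k)) }.

Lemma trace_full m LL rr : alg_trace m LL rr -> perm_eq L0 (enum 'I_n) ->
  forall k, k <= m -> perm_eq (LL k) (enum 'I_n).
Proof.
case=> h0 hS _ _ _ p0; elim=> [|k IH] km; first by rewrite h0.
have pk := IH (ltnW km).
by rewrite hS //; apply: perm_trans (perm_mtf (full_uniq pk) (full_mem _ pk)) pk.
Qed.

Lemma trace_extend m LL rr r : alg_trace m LL rr -> r \in sigma ->
  (forall k, k < m -> (dl (rr k) < dl r)%R) ->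
  (forall k, k < m -> (arr r <= dl (rr k))%R -> access_depth LL rr k < pos (LL k) (elem r)) ->
  alg_trace m.+1 (ext LL m.+1 (mtf (elem r) (LL m))) (ext rr m r).
Proof.
case=> h0 hS hR hT hN rs later unserved; split.
- by rewrite ext_lt.
- move=> k; rewrite ltnS leq_eqVlt => /orP [/eqP ->|km]; first by rewrite !ext_new ext_lt.
  by rewrite !ext_lt ?(leqW km) ?hS.
- move=> k; rewrite ltnS leq_eqVlt => /orP [/eqP ->|km]; first by rewrite ext_new.
  by rewrite ext_lt ?hR.
- move=> k k' kk'; rewrite ltnS leq_eqVlt => /orP [/eqP ek'|k'm].
    by subst k'; rewrite ext_new ext_lt ?later.
  by rewrite !ext_lt ?hT // (ltn_trans kk').
- move=> k k' k'k; rewrite ltnS leq_eqVlt => /orP [/eqP ek|km].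
    subst k; rewrite ext_new access_depth_ext // !ext_lt ?(leqW k'k) //.
    exact: unserved.
  have k'm := ltn_trans k'k km.
  by rewrite access_depth_ext // !ext_lt ?(leqW k'm) //; apply: hN.
Qed.

Record alg_invariant_at (s : seq R) (st : astate R n) m LL rr : Prop := {
  inv_trace : alg_trace m LL rr;
  inv_list : aL st = LL m;
  inv_cost : sched_cost (asched st) = \sum_(k < m) event_cost LL rr k;
  inv_size : size (aserved st) = size sigma;
  inv_times : forall k, k < m -> dl (rr k) \in s;
  inv_flags : forall r, (r, false) \in zip sigma (aserved st) -> forall k, k < m ->
    ~~ ((arr r <= dl (rr k))%R && (pos (LL k) (elem r) <= access_depth LL rr k)) }.

Definition alg_invariant s st := exists m LL rr, alg_invariant_at s st m LL rr.

Lemma sorted_rcons_lt (s : seq R) t x : sorted (fun x y : R => (x <= y)%R) (rcons s t) ->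
  uniq (rcons s t) -> x \in s -> (x < t)%R.
Proof.
move=> so; rewrite rcons_uniq => /andP [ts _] xs.
have le_t : all (fun y => (y <= t)%R) s.
  move: so; rewrite -rev_sorted rev_rcons /= path_sortedE ?all_rev; first by case/andP.
  by move=> a b c ba cb; apply: le_trans cb ba.
by rewrite lt_def (allP le_t x xs) andbT; apply: contraNneq ts => ->.
Qed.

Lemma sched_cost_event (S : sched R) t p i :
  sched_cost (S ++ (t, Access p) :: [seq (t, a) | a <- [seq Swap j | j <- rev (iota 0 i)]])
  = sched_cost S + p + i.
Proof.
rewrite /sched_cost big_cat big_cons !big_map /= sum1_size size_rev size_iota.
by rewrite addnA.
Qed.

Lemma event_cost_ext m (LL : nat -> seq 'I_n) (rr : nat -> req) L (r : req) :
  \sum_(k < m.+1) event_cost (ext LL m.+1 L) (ext rr m r) k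
  = \sum_(k < m) event_cost LL rr k
    + minn (2 * pos (LL m) (elem r) - 1) n + (pos (LL m) (elem r)).-1.
Proof.
rewrite big_ord_recr /= addnA; congr (_ + _ + _).
- by apply: eq_bigr => k _; rewrite /event_cost access_depth_ext ?trig_pos_ext.
- by rewrite /access_depth /trig_pos !ext_new ext_lt.
- by rewrite /trig_pos !ext_new ext_lt.
Qed.

Lemma invariant_step s st t : perm_eq L0 (enum 'I_n) ->
  sorted (fun x y : R => (x <= y)%R) (rcons s t) -> uniq (rcons s t) ->
  alg_invariant s st -> alg_invariant (rcons s t) (alg_step sigma st t).
Proof.
move=> p0 so un [m [LL [rr [tr hL hc hs hts hfl]]]].
have old_time k : k < m -> dl (rr k) \in rcons s t.
  by move=> km; rewrite mem_rcons in_cons hts ?orbT.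
rewrite /alg_step /=; case: ifP => [_|trig_ne]; first by exists m, LL, rr.
set ps := zip sigma (aserved st); set trig := [seq rb <- ps | _].
have [[r b] rb_trig ->] :=
  bigmax_witness (fun rb : req * bool => pos (aL st) (elem rb.1)) (negbT trig_ne).
move: rb_trig; rewrite mem_filter /= hL => /andP [/andP [/andP [_ /negbTE bF] /eqP dr] rps].
subst b t; set x := elem r.
have full_m := trace_full tr p0 (leqnn m).
have rs : r \in sigma.
  by rewrite -(@unzip1_zip _ _ sigma (aserved st)) ?hs //; apply/mapP; exists (r, false).
exists m.+1, (ext LL m.+1 (mtf x (LL m))), (ext rr m r); split.
- apply: trace_extend => // [k km|k km ark].
    exact: sorted_rcons_lt so un (hts k km).
  by have := hfl _ rps k km; rewrite ark /= -ltnNge.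
- by rewrite /= front_swaps_mtf ?ext_new ?full_uniq ?full_mem.
- by rewrite /= sched_cost_event hc event_cost_ext.
- by rewrite /= size_map size_zip hs minnn.
- move=> k; rewrite ltnS leq_eqVlt => /orP [/eqP ->|km].
    by rewrite ext_new mem_rcons mem_head.
  by rewrite ext_lt ?old_time.
move=> r' /zip_update_false /andP [r'ps notnow] k.
rewrite ltnS leq_eqVlt => /orP [/eqP ->|km].
  by rewrite /access_depth /trig_pos !ext_new ext_lt //= andbT in notnow *.
by rewrite access_depth_ext // !ext_lt ?(leqW km) ?hfl.
Qed.

(* Folding alg_step over increasing deadlines preserves the invariant;
   r0 fills the empty trace of the initial state. *)
Lemma invariant_fold s (r0 : req) : perm_eq L0 (enum 'I_n) ->
  sorted (fun x y : R => (x <= y)%R) s -> uniq s ->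
  alg_invariant s (foldl (alg_step sigma) (AState L0 (nseq (size sigma) false) [::]) s).
Proof.
move=> p0; elim/last_ind: s => [|s t IH] so un.
  exists 0, (fun _ => L0), (fun _ => r0).
  by split; rewrite /= ?/sched_cost ?big_nil ?big_ord0 ?size_nseq //; split.
rewrite foldl_rcons; apply: invariant_step => //; apply: IH.
  by apply: subseq_sorted so; [exact: le_trans | exact: subseq_rcons].
by move: un; rewrite rcons_uniq => /andP [].
Qed.

(* ALG's run is described by a trace whose event costs add up to its cost;
   r0 is an arbitrary request, only used to fill the empty trace. *)
Lemma alg_trace_cost (r0 : req) : perm_eq L0 (enum 'I_n) ->
  exists m LL rr, alg_trace m LL rr /\
    alg_cost L0 sigma = \sum_(k < m) event_cost LL rr k.
Proof.
move=> p0; have so := sort_sorted (@le_total _ R) (undup (map (@dl R n) sigma)).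
have un : uniq (sort (fun x y : R => (x <= y)%R) (undup (map (@dl R n) sigma))).
  by rewrite sort_uniq undup_uniq.
have [m [LL [rr [tr _ hc _ _ _]]]] := invariant_fold r0 p0 so un.
by exists m, LL, rr.
Qed.

End AlgorithmTrace.

Lemma sum_range_mask a b N (F : nat -> nat) : a <= b -> b <= N ->
  \sum_(a <= u < b) F u = \sum_(u < N) ((a <= u) && (u < b)) * F u.
Proof.
move=> ab bN; rewrite -(big_mkord xpredT (fun u => ((a <= u) && (u < b)) * F u)).
rewrite (big_cat_nat (leq0n a) (leq_trans ab bN)) (big_cat_nat ab bN) /=.
rewrite [X in X + _]big_nat_cond [X in X + _]big1 ?add0n; last first.
  by move=> u /andP [/andP [_ ua] _]; rewrite leqNgt ua.
rewrite [X in _ + X]big_nat_cond [X in _ + X]big1 ?addn0; last first.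
  by move=> u /andP [/andP [bu _] _]; rewrite ltnNge bu andbF.
rewrite big_nat_cond [RHS]big_nat_cond.
by apply: eq_bigr => u /andP [-> _]; rewrite mul1n.
Qed.

Lemma sum_le1 m (c : 'I_m -> bool) :
  (forall k k', c k -> c k' -> k = k') -> \sum_(k < m) (c k : nat) <= 1.
Proof.
move=> H; case: (pickP c) => [k ck|none]; last by rewrite big1 // => k _; rewrite none.
rewrite (bigD1 k) //= ck big1 // => k' /negPf k'k.
by case ck': (c k') => //; rewrite (H _ _ ck ck') eqxx in k'k.
Qed.

Lemma sum_pick_nat N s c : s < N -> \sum_(u < N) (s == u) * c = c.
Proof.
move=> sN; rewrite (bigD1 (Ordinal sN)) //= eqxx mul1n big1 ?addn0 // => u.
by rewrite -val_eqE /= eq_sym => /negPf ->.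
Qed.

Section Analysis.
Variables (R : realFieldType) (n : nat) (L0 : seq 'I_n) (sigma : seq (request R n)).
Variable S : sched R.
Hypothesis full0 : perm_eq L0 (enum 'I_n).
Hypothesis feasS : feasible L0 sigma S.

Local Notation N := (size S).

Definition opt_time u := (nth (0%R, Access 0) S u).1.
Definition opt_act u := (nth (0%R, Access 0) S u).2.
Definition opt_list u := list_before L0 S u.
Definition swap_cost u := if opt_act u is Swap _ then 1 else 0.
Definition access_len u := if opt_act u is Access J then J else 0.
Definition pushed u z := movesback (opt_list u) (opt_act u) z.

Lemma opt_list_step u : opt_list u.+1 = apply_act (opt_list u) (opt_act u).
Proof.
rewrite /opt_list /list_before /opt_act; case: (ltnP u N) => h.
  by rewrite (take_nth (0%R, Access 0) h) map_rcons foldl_rcons.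
by rewrite !take_oversize ?(leqW h) // nth_default.
Qed.

Lemma opt_list_full u : perm_eq (opt_list u) (enum 'I_n).
Proof.
elim: u => [|u IH]; first by rewrite /opt_list /list_before take0.
by rewrite opt_list_step; apply: perm_trans (perm_apply_act _ _) IH.
Qed.

Lemma inversions_drift A a b : a <= b ->
  inversions A (opt_list b) <= inversions A (opt_list a) + \sum_(a <= u < b) swap_cost u.
Proof.
elim: b => [|b IH] ab; first by rewrite leqn0 in ab; rewrite (eqP ab) big_geq ?addn0.
case: (eqVneq a b.+1) => [->|ne]; first by rewrite big_geq ?addn0.
have ab' : a <= b by lia.
rewrite big_nat_recr //= opt_list_step.
apply: leq_trans (inversions_apply _ _ _) _.
by rewrite /swap_cost addnA leq_add2r IH.
Qed.

Lemma index_drift z a b : a <= b ->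
  index z (opt_list b) <= index z (opt_list a) + \sum_(a <= u < b) pushed u z.
Proof.
elim: b => [|b IH] ab; first by rewrite leqn0 in ab; rewrite (eqP ab) big_geq ?addn0.
case: (eqVneq a b.+1) => [->|ne]; first by rewrite big_geq ?addn0.
have ab' : a <= b by lia.
rewrite big_nat_recr //= opt_list_step.
apply: leq_trans (index_apply _ _ _) _.
by rewrite /pushed addnA leq_add2r IH.
Qed.

Lemma opt_cost_split : sched_cost S = \sum_(u < N) (swap_cost u + access_len u).
Proof.
rewrite /sched_cost (big_nth (0%R, Access 0)) big_mkord.
by apply: eq_bigr => u _; rewrite /swap_cost /access_len /opt_act; case: (nth _ S u).2.
Qed.

Lemma opt_time_mono u v : u <= v -> v < N -> (opt_time u <= opt_time v)%R.
Proof.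
move=> uv vN; case/andP: feasS => so _.
have := le_sorted_leq_nth 0%R so; rewrite size_map => /(_ u v).
by rewrite !inE !(nth_map (0%R, Access 0)) ?(leq_ltn_trans uv vN) //; apply.
Qed.

Variables (m : nat) (LL : nat -> seq 'I_n) (rr : nat -> request R n).
Hypothesis trace : alg_trace L0 sigma m LL rr.

(* serve k: the first step of S serving the request of event k;
   after k: the first step of S strictly after the time of event k, so that
   OPT's list at event k is opt_list (after k). *)
Definition serve k := find (serves_at L0 S (rr k)) (iota 0 N).
Definition after k := find (fun e : R * action => (dl (rr k) < e.1)%R) S.

Lemma event_list_full k : k <= m -> perm_eq (LL k) (enum 'I_n).
Proof. exact: (trace_full trace full0). Qed.

Lemma trig_pos_bounds k : k <= m -> 0 < trig_pos LL rr k <= n /\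
  trig_pos LL rr k <= access_depth LL rr k.
Proof.
move=> km; have := full_pos_le (elem (rr k)) (event_list_full km).
rewrite /access_depth /trig_pos /pos; lia.
Qed.

Lemma serveP k : k < m ->
  [/\ serve k < N, (arr (rr k) <= opt_time (serve k))%R,
      (opt_time (serve k) <= dl (rr k))%R &
      pos (opt_list (serve k)) (elem (rr k)) <= access_len (serve k)].
Proof.
move=> km; have hs : has (serves_at L0 S (rr k)) (iota 0 N).
  by case/andP: feasS => _ /allP; apply; apply: trace_req trace k km.
have sN : serve k < N by rewrite /serve -[X in _ < X](size_iota 0) -has_find.
have := nth_find 0 hs; rewrite -/(serve k) nth_iota // add0n.
rewrite /serves_at /opt_time /access_len /opt_act /opt_list.
case: (nth _ S _) => tm a /and3P [h1 h2 h3].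
by split=> //; case: a h3.
Qed.

Lemma after_le k : after k <= N.
Proof. exact: find_size. Qed.

Lemma before_after k u : u < after k -> (opt_time u <= dl (rr k))%R.
Proof. by move=> h; have := before_find (0%R, Access 0) h; rewrite /opt_time leNgt => ->. Qed.

Lemma after_later k : after k < N -> (dl (rr k) < opt_time (after k))%R.
Proof.
move=> h; have hs : has (fun e : R * action => (dl (rr k) < e.1)%R) S by rewrite has_find.
exact: (nth_find (0%R, Access 0) hs).
Qed.

Lemma serve_lt_after k : k < m -> serve k < after k.
Proof.
move=> km; have [sN _ le_t _] := serveP km.
rewrite ltnNge; apply/negP => h.
have := lt_le_trans (after_later (leq_ltn_trans h sN)) (le_trans (opt_time_mono h sN) le_t).
by rewrite ltxx.
Qed.

Lemma after_mono k k' : k <= k' -> k' < m -> after k <= after k'.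
Proof.
rewrite leq_eqVlt => /orP [/eqP ->|kk'] k'm //.
rewrite leqNgt; apply/negP => h.
have := trace_time trace kk' k'm.
have := lt_le_trans (after_later (leq_trans h (after_le k))) (before_after h).
by move=> lt1 lt2; have := lt_trans lt2 lt1; rewrite ltxx.
Qed.

(* One event, against OPT's list at that moment, with x = elem (rr k) at
   position i there and j in OPT's list: its cost plus the change of the
   potential 6 * inversions, plus the slack 3 i + 8 left for the grouping
   argument, is at most 12 min(i, j). *)
Lemma event_amortized k : k < m ->
  event_cost LL rr k + 6 * inversions (LL k.+1) (opt_list (after k))
    + (3 * trig_pos LL rr k + 8) <=
  6 * inversions (LL k) (opt_list (after k))
    + 12 * minn (trig_pos LL rr k) (pos (opt_list (after k)) (elem (rr k))).
Proof.
move=> km; rewrite (trace_mtf trace km).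
have [] := inversions_mtf (elem (rr k)) (event_list_full (ltnW km)) (opt_list_full (after k)).
move: (inversions (mtf _ _) _) (inversions (LL k) _) (\sum_(q < n) _) (\sum_(q < n) _).
by move=> I1 I0 b a; rewrite /event_cost /access_depth /trig_pos /pos; lia.
Qed.

Definition prev_after k := if k is k'.+1 then after k' else 0.

Lemma prev_after_le k : k < m -> prev_after k <= after k.
Proof. by case: k => [|k] //= km; apply: after_mono. Qed.

(* Summing event_amortized, with the drift of the potential caused by OPT's
   swaps between consecutive events. *)
Lemma potential_bound m' : m' <= m ->
  \sum_(k < m') (event_cost LL rr k + (3 * trig_pos LL rr k + 8))
    + 6 * inversions (LL m') (opt_list (prev_after m')) <=
  6 * \sum_(0 <= u < prev_after m') swap_cost u +
  \sum_(k < m') 12 * minn (trig_pos LL rr k) (pos (opt_list (after k)) (elem (rr k))).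
Proof.
elim: m' => [|k IH] km.
  by rewrite !big_ord0 /= (trace_start trace) /opt_list /list_before take0 inversions_refl.
have := IH (ltnW km); rewrite !big_ord_recr /=.
have hd := inversions_drift (LL k) (prev_after_le km).
have he := event_amortized km.
rewrite (big_cat_nat (leq0n (prev_after k)) (prev_after_le km)) /=.
move: hd he.
move: (inversions (LL k) (opt_list (prev_after k))) (inversions (LL k) (opt_list (after k)))
  (inversions (LL k.+1) (opt_list (after k)))
  (\sum_(prev_after k <= u < after k) swap_cost u) (\sum_(0 <= u < prev_after k) swap_cost u)
  (\sum_(i < k) (event_cost LL rr i + (3 * trig_pos LL rr i + 8)))
  (\sum_(i < k) 12 * minn (trig_pos LL rr i) (pos (opt_list (after i)) (elem (rr i)))).
by move=> a b c d e f g; lia.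
Qed.

Definition pushback k := \sum_(serve k <= u < after k) pushed u (elem (rr k)).

Lemma opt_pos_le k : k < m ->
  pos (opt_list (after k)) (elem (rr k)) <= access_len (serve k) + pushback k.
Proof.
move=> km; have [_ _ _ hJ] := serveP km.
have := index_drift (elem (rr k)) (ltnW (serve_lt_after km)).
by move: hJ; rewrite /pos /pushback; lia.
Qed.

Lemma deep_stays_deep k k' : k <= k' -> k' < m ->
  (forall e, k <= e -> e < k' -> access_depth LL rr e < pos (LL e) (elem (rr k'))) ->
  pos (LL k) (elem (rr k')) <= pos (LL k') (elem (rr k')).
Proof.
move=> kk' k'm deep.
suff step d : k + d <= k' -> pos (LL k) (elem (rr k')) <= pos (LL (k + d)) (elem (rr k')).
  by have := step (k' - k); rewrite subnKC //; apply.
elim: d => [|d IH] hd; first by rewrite addn0.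
have em : k + d < m by lia.
have hd' : k + d < k' by lia.
apply: leq_trans (IH (ltnW hd')) _.
rewrite addnS (trace_mtf trace em) /pos ltnS.
apply: mtf_index_ge; first exact/full_uniq/event_list_full/ltnW.
apply/eqP => e; have := deep (k + d) (leq_addr _ _) hd'; rewrite e.
by have [_ hp] := trig_pos_bounds (ltnW em); move: hp; rewrite /trig_pos; lia.
Qed.

(* Events whose requests OPT serves with the same access have at least
   doubling trigger positions: the later request had already arrived, so it
   lay beyond the earlier access depth 2 i - 1. *)
Lemma same_serve_doubling k k' : k < k' -> k' < m -> serve k = serve k' ->
  2 * trig_pos LL rr k <= trig_pos LL rr k'.
Proof.
move=> kk' k'm same.
have km : k < m := ltn_trans kk' k'm.
have [_ a1 _ _] := serveP k'm.
have [_ _ a2 _] := serveP km.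
have arrived : (arr (rr k') <= dl (rr k))%R by rewrite same in a2; apply: le_trans a1 a2.
have deep e : k <= e -> e < k' -> access_depth LL rr e < pos (LL e) (elem (rr k')).
  move=> ke ek'; apply: (trace_unserved trace) => //; apply: (le_trans arrived).
  move: ke; rewrite leq_eqVlt => /orP [/eqP ->|kle] //.
  by apply/ltW/(trace_time trace) => //; apply: ltn_trans ek' k'm.
have h1 := deep k (leqnn k) kk'.
have h2 := deep_stays_deep (ltnW kk') k'm deep.
have h3 := full_pos_le (elem (rr k')) (event_list_full (ltnW km)).
by move: h1 h2 h3; rewrite /access_depth /trig_pos; lia.
Qed.

(* Each swap of OPT pushes back the element of at most one event within
   that event's window [serve k, after k). *)
Lemma pushback_total : \sum_(k < m) pushback k <= \sum_(u < N) swap_cost u.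
Proof.
rewrite /pushback.
under eq_bigr => k _ do
  rewrite (sum_range_mask _ (ltnW (serve_lt_after (ltn_ord k))) (after_le k)).
rewrite exchange_big /=; apply: leq_sum => u _.
under eq_bigr => k _ do rewrite !mulnb.
rewrite /swap_cost /pushed; case ea: (opt_act u) => [i|j].
  by rewrite big1 // => k _; rewrite andbF.
apply: sum_le1 => k k' /andP [/andP [s1 p1] m1] /andP [/andP [s2 p2] m2].
have ex := movesback_uniq m1 m2.
suff H (a b : 'I_m) : a < b -> serve b <= u -> u < after a -> elem (rr a) = elem (rr b) -> False.
  case: (ltngtP k k') => [h|h|/val_inj] //; first by case: (H _ _ h s2 p1 ex).
  by case: (H _ _ h s1 p2 (esym ex)).
move=> ab sb pa exab.
have bm := ltn_ord b; have am := ltn_ord a.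
have [_ a1 _ _] := serveP bm.
have arrived := le_trans a1 (le_trans (opt_time_mono sb (leq_trans pa (after_le a)))
  (before_after pa)).
have := trace_unserved trace ab bm arrived.
rewrite -exab; have [_ hp] := trig_pos_bounds (ltnW am); move: hp; rewrite /trig_pos; lia.
Qed.

(* Grouping the events by the access of OPT serving them and applying the
   charging lemma to each group. *)
Lemma access_charging :
  \sum_(k < m) 12 * minn (trig_pos LL rr k) (access_len (serve k)) <=
  \sum_(k < m) (3 * trig_pos LL rr k + 8) + 24 * \sum_(u < N) access_len u.
Proof.
have by_serve (F : nat -> nat) :
    \sum_(k < m) F k = \sum_(u < N) \sum_(k < m) (serve k == u) * F k.
  rewrite exchange_big /=; apply: eq_bigr => k _.
  by have [sN _ _ _] := serveP (ltn_ord k); rewrite sum_pick_nat.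
rewrite (by_serve (fun k => 12 * minn (trig_pos LL rr k) (access_len (serve k)))).
rewrite (by_serve (fun k => 3 * trig_pos LL rr k + 8)) big_distrr -big_split /=.
apply: leq_sum => u _.
rewrite (eq_bigr (fun k : 'I_m => (serve k == u) * (12 * minn (trig_pos LL rr k) (access_len u))));
  last by move=> k _; case: eqP => [->|].
apply: (@charging (trig_pos LL rr) (fun k => serve k == u) _ m).
by move=> k k' kk' k'm /eqP e /eqP e'; apply: same_serve_doubling => //; rewrite e e'.
Qed.

(* The first m events of ALG cost at most 24 times OPT: 6 per OPT swap for
   the potential, 12 per OPT swap for the pushbacks, 24 per unit of access. *)
Lemma events_cost_le_opt : \sum_(k < m) event_cost LL rr k <= 24 * sched_cost S.
Proof.
have h1 := potential_bound (leqnn m).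
have h2 : \sum_(0 <= u < prev_after m) swap_cost u <= \sum_(u < N) swap_cost u.
  have le_N : prev_after m <= N by case: (m) => [|k] //=; apply: after_le.
  rewrite -(big_mkord xpredT swap_cost) (big_cat_nat (leq0n _) le_N) /=; apply: leq_addr.
have h3 : \sum_(k < m) 12 * minn (trig_pos LL rr k) (pos (opt_list (after k)) (elem (rr k))) <=
    \sum_(k < m) 12 * minn (trig_pos LL rr k) (access_len (serve k)) + 12 * \sum_(k < m) pushback k.
  rewrite big_distrr -big_split /=; apply: leq_sum => k _.
  by have := opt_pos_le (ltn_ord k); lia.
have h4 := pushback_total.
have h5 := access_charging.
rewrite big_split /= in h1.
rewrite opt_cost_split [in X in _ <= X]big_split /=.
move: h1 h2 h3 h4 h5.
move: (\sum_(k < m) event_cost LL rr k) (\sum_(i < m) (3 * trig_pos LL rr i + 8))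
  (6 * inversions (LL m) (opt_list (prev_after m))) (\sum_(0 <= u < prev_after m) swap_cost u)
  (\sum_(u < N) swap_cost u)
  (\sum_(k < m) 12 * minn (trig_pos LL rr k) (pos (opt_list (after k)) (elem (rr k))))
  (\sum_(k < m) 12 * minn (trig_pos LL rr k) (access_len (serve k)))
  (\sum_(k < m) pushback k) (\sum_(u < N) access_len u).
by move=> a b c d e f g h i; lia.
Qed.

End Analysis.

Theorem theorem1 (R : realFieldType) (n : nat) (L0 : seq 'I_n)
    (sigma : seq (request R n)) (S : sched R) :
  perm_eq L0 (enum 'I_n) ->
  all (fun r => (arr r <= dl r)%R) sigma ->
  feasible L0 sigma S ->
  (alg_cost L0 sigma <= 24 * sched_cost S)%N.
Proof.
move=> full0 _ feasS.
case: sigma feasS => [|r0 s] feasS; first by rewrite /alg_cost /alg_run /sched_cost big_nil.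
have [m [LL [rr [trace ->]]]] := @alg_trace_cost _ _ L0 (r0 :: s) r0 full0.
exact: (events_cost_le_opt full0 feasS trace).
Qed.
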